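(* Let $(\Lambda V,\partial)$ be a simply connected free graded-commutative cochain algebra over $\mathbb{Q}$ with $V=V^{q}\oplus V^{\le n}$, where $q>n$. Let $\alpha,\alpha'\colon(\Lambda V,\partial)\to(\Lambda V,\partial)$ be cochain algebra morphisms such that $\alpha=\alpha'=\mathrm{id}$ on $V^{\le n}$ and, for $v\in V^q$, $\alpha(v)=v+z$ and $\alpha'(v)=v+z'$ (with $z,z'\in\Lambda V$ depending on $v$). Assume $z'-z=\partial(u)$ for some $u\in\Lambda V$. Then $\alpha$ and $\alpha'$ are homotopic.
   Context: Simply connected means $V^1=0$ (and $V^0=0$). Homotopy is defined as follows: let $\overline V,\widehat V$ be graded vector spaces with $(\overline V)^n=V^{n+1}$, $(\widehat V)^n=V^n$, and put on $\Lambda(V,\overline V,\widehat V)$ the differential $D(v)=\partial v$, $D(\widehat v)=0$, $D(\overline v)=\widehat v$. Let $S$ be the degree $-1$ derivation with $S(v)=\overline v$, $S(\overline v)=S(\widehat v)=0$, set $\theta=DS+SD$ and $e^{\theta}(v)=v+\widehat v+\sum_{n\ge1}\frac{1}{n!}(S\circ\partial)^n(v)$. Two morphisms $\alpha,\alpha'$ are homotopic if there is a cochain algebra morphism $F\colon(\Lambda(V,\overline V,\widehat V),D)\to(\Lambda V,\partial)$ with $F(v)=\alpha(v)$ and $F\circ e^{\theta}(v)=\alpha'(v)$ for all $v\in V$. *)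

From HB Require Import structures.
From mathcomp Require Import all_boot all_order all_algebra.
Set Implicit Arguments. Unset Strict Implicit. Unset Printing Implicit Defensive.
Import Order.TTheory GRing.Theory Num.Theory.
Local Open Scope ring_scope.

Section Defs.

(* (A, hom) is a graded-commutative Q-algebra: hom p a means "a is homogeneous
   of degree p", A = (+)_{p >= 0} A^p. *)
Definition is_gca (A : algType rat) (hom : nat -> A -> Prop) : Prop :=
  [/\ (forall p, hom p 0 /\ forall (c : rat) a b, hom p a -> hom p b -> hom p (c *: a + b)),
      hom 0%N 1,
      (forall p q a b, hom p a -> hom q b -> hom (p + q)%N (a * b)),
      (forall p q a b, hom p a -> hom q b -> a * b = (-1) ^+ (p * q) * (b * a)) &
      ((forall a : A, exists N (f : nat -> A),
          (forall k, hom k (f k)) /\ a = \sum_(k < N) f k) /\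
      (forall N (f : nat -> A), (forall k, hom k (f k)) ->
          \sum_(k < N) f k = 0 -> forall k, (k < N)%N -> f k = 0))].

Definition lin_map (A B : algType rat) (f : A -> B) : Prop :=
  forall (c : rat) a b, f (c *: a + b) = c *: f a + f b.

Definition is_cdga (A : algType rat) (hom : nat -> A -> Prop) (d : A -> A) : Prop :=
  [/\ is_gca hom, lin_map d,
      (forall p a, hom p a -> hom p.+1 (d a)),
      (forall p a b, hom p a -> d (a * b) = d a * b + (-1) ^+ p * (a * d b)) &
      (forall a, d (d a) = 0)].

Definition is_deriv_m1 (A : algType rat) (hom : nat -> A -> Prop) (S : A -> A) : Prop :=
  [/\ lin_map S,
      (forall p a, hom p.+1 a -> hom p (S a)),
      (forall a, hom 0%N a -> S a = 0) &
      (forall p a b, hom p a -> S (a * b) = S a * b + (-1) ^+ p * (a * S b))].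

Definition is_gca_mor (A B : algType rat) (homA : nat -> A -> Prop)
    (homB : nat -> B -> Prop) (F : A -> B) : Prop :=
  [/\ lin_map F, F 1 = 1, (forall a b, F (a * b) = F a * F b) &
      (forall p a, homA p a -> homB p (F a))].

Definition is_cdga_mor (A B : algType rat) (homA : nat -> A -> Prop) (dA : A -> A)
    (homB : nat -> B -> Prop) (dB : B -> B) (F : A -> B) : Prop :=
  is_gca_mor homA homB F /\ forall a, F (dA a) = dB (F a).

(* (A, hom) is the free graded-commutative algebra Lambda V on the graded space V
   with homogeneous basis x : I -> A, x i of degree deg i. *)
Definition is_free_gca (A : algType rat) (hom : nat -> A -> Prop)
    (I : Type) (deg : I -> nat) (x : I -> A) : Prop :=
  [/\ is_gca hom, (forall i, hom (deg i) (x i)) &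
      forall (B : algType rat) (homB : nat -> B -> Prop) (b : I -> B),
        is_gca homB -> (forall i, homB (deg i) (b i)) ->
        (exists F : A -> B, is_gca_mor hom homB F /\ forall i, F (x i) = b i) /\
        (forall F G : A -> B, is_gca_mor hom homB F -> is_gca_mor hom homB G ->
           (forall i, F (x i) = b i) -> (forall i, G (x i) = b i) ->
           forall a, F a = G a)].

Definition in_span (A : algType rat) (I : Type) (x : I -> A) (P : I -> Prop) (v : A) : Prop :=
  exists N (ix : 'I_N -> I) (c : 'I_N -> rat),
    (forall k, P (ix k)) /\ v = \sum_(k < N) c k *: x (ix k).

(* generators of Lambda(V, Vbar, Vhat): indices I + I + I *)
Definition sum3 (I T : Type) (f g h : I -> T) : I + I + I -> T :=
  fun j => match j with inl (inl i) => f i | inl (inr i) => g i | inr i => h i end.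

(* W = Lambda(V, Vbar, Vhat) with generators wv (= v), wb (= vbar), wh (= vhat),
   iota : Lambda V -> W the inclusion, D and S as in the paper.  The series
   e^theta(v) = v + vhat + sum_{n>=1} (S o D)^n (v) / n! is read as: the images
   under F of its partial sums are eventually equal to alpha'(v). *)
Definition homotopic (A : algType rat) (hom : nat -> A -> Prop) (d : A -> A)
    (I : Type) (deg : I -> nat) (x : I -> A) (al al' : A -> A) : Prop :=
  forall (W : algType rat) (homW : nat -> W -> Prop) (wv wb wh : I -> W)
         (iota : A -> W) (D S : W -> W),
    is_free_gca homW (sum3 deg (fun i => (deg i).-1) deg) (sum3 wv wb wh) ->
    is_gca_mor hom homW iota -> (forall i, iota (x i) = wv i) ->
    is_cdga homW D ->
    (forall i, D (wv i) = iota (d (x i))) ->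
    (forall i, D (wb i) = wh i) ->
    (forall i, D (wh i) = 0) ->
    is_deriv_m1 homW S ->
    (forall i, S (wv i) = wb i) ->
    (forall i, S (wb i) = 0) ->
    (forall i, S (wh i) = 0) ->
    exists F : W -> A,
      [/\ is_cdga_mor homW D hom d F,
          (forall i, F (wv i) = al (x i)) &
          (forall i, exists N0, forall N, (N0 <= N)%N ->
              F (wv i + wh i +
                 \sum_(1 <= k < N.+1) (k`!%:R : rat)^-1 *: iter k (S \o D) (wv i))
              = al' (x i))].

End Defs.

From HB Require Import structures.
From mathcomp Require Import all_boot all_order all_algebra.
From mathcomp Require Import boolp classical_sets zify.
Import Order.TTheory GRing.Theory Num.Theory.
Set Implicit Arguments. Unset Strict Implicit. Unset Printing Implicit Defensive.
Local Open Scope ring_scope.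

(* The homotopy [F : Lambda(V, Vbar, Vhat) -> Lambda V] is [alpha] on [V] and sends
   [vbar] and [vhat] to [tau v] and [d (tau v)] for [v] in [V^q], and to [0] for [v]
   of degree at most [n]; here [tau : V^q -> (Lambda V)^(q-1)] is linear with
   [d tau = alpha' - alpha].  Such a [tau] exists by the hypothesis and Zorn's lemma,
   and can be chosen to vanish on the [V^q]-components of the differentials of the
   generators of degree at most [n], on which [alpha' - alpha] already vanishes.
   As [S] squares to zero, the terms [(S D)^k v] of [e^theta v] are
   [S (theta^(k-1) (d v))].  In degrees at most [q + 1], the generators of [V^q]
   occur only linearly in [Lambda V], so [theta (d v)] lies in the subalgebra
   generated by [V^(<= n)], [Vbar] and [Vhat], where [F S] vanishes, and the term
   [k = 1] vanishes by the choice of [tau].  Hence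
   [F (e^theta v) = alpha v + d (tau v) = alpha' v]. *)

Section LinMap.
Variables (A B : algType rat) (f : A -> B).
Hypothesis flin : lin_map f.

Lemma lin_map0 : f 0 = 0.
Proof.
have := flin 1 0 0; rewrite !scale1r addr0 => e.
by apply: (@addrI _ (f 0)); rewrite addr0 -e.
Qed.

Lemma lin_mapD a b : f (a + b) = f a + f b.
Proof. by have := flin 1 a b; rewrite !scale1r. Qed.

Lemma lin_mapZ c a : f (c *: a) = c *: f a.
Proof. by have := flin c a 0; rewrite !addr0 lin_map0 addr0. Qed.

Lemma lin_mapB a b : f (a - b) = f a - f b.
Proof. by rewrite lin_mapD -scaleN1r lin_mapZ scaleN1r. Qed.

Lemma lin_map_sum (J : Type) (r : seq J) (P : pred J) (F : J -> A) :
  f (\sum_(j <- r | P j) F j) = \sum_(j <- r | P j) f (F j).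
Proof. exact: (big_morph f lin_mapD lin_map0). Qed.

End LinMap.

Lemma sign_mulE (A : algType rat) k (a : A) : (-1) ^+ k * a = ((-1) ^+ k : rat) *: a.
Proof.
by rewrite -signr_odd -[in RHS]signr_odd; case: odd;
  rewrite ?expr1 ?expr0 ?mulN1r ?scaleN1r ?mul1r ?scale1r.
Qed.

Lemma gca_mor_comp (A B C : algType rat) (hA : nat -> A -> Prop) (hB : nat -> B -> Prop)
    (hC : nat -> C -> Prop) f g :
  is_gca_mor hA hB f -> is_gca_mor hB hC g -> is_gca_mor hA hC (fun a => g (f a)).
Proof.
move=> [lf f1 fM fh] [lg g1 gM gh]; split.
- by move=> c a b; rewrite lf lg.
- by rewrite f1 g1.
- by move=> a b; rewrite fM gM.
- by move=> p a /fh /gh.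
Qed.

Lemma sum_widen (V : nmodType) N M (f : nat -> V) : (N <= M)%N ->
  \sum_(k < N) f k = \sum_(k < M) (if (k < N)%N then f k else 0).
Proof. by move=> le; rewrite (big_ord_widen M f le) big_mkcond. Qed.

Lemma sum_delta (V : nmodType) M m (a : V) : (m < M)%N ->
  \sum_(k < M) (if (k : nat) == m then a else 0) = a.
Proof. by move=> lt; rewrite -big_mkcond /= (big_pred1 (Ordinal lt)). Qed.

Section Gca.
Variables (W : algType rat) (hom : nat -> W -> Prop).
Hypothesis gca : is_gca hom.

Lemma gca_hom0 p : hom p 0.
Proof. by case: gca => h _ _ _ _; case: (h p). Qed.

Lemma gca_homZD p c a b : hom p a -> hom p b -> hom p (c *: a + b).
Proof. by case: gca => h _ _ _ _; case: (h p) => _; apply. Qed.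

Lemma gca_homB p a b : hom p a -> hom p b -> hom p (a - b).
Proof. by move=> ha hb; rewrite -scaleN1r addrC; apply: gca_homZD. Qed.

Lemma gca_component m y M (G : nat -> W) :
  hom m y -> (forall k, hom k (G k)) -> y = \sum_(k < M) G k ->
  y = if (m < M)%N then G m else 0.
Proof.
move=> hy hG e; have [_ _ _ _ [_ uniq]] := gca.
pose M' := maxn M m.+1.
pose G' k := (-1) *: (if k == m then y else 0) + if (k < M)%N then G k else 0.
have hG' k : hom k (G' k).
  apply: gca_homZD; first by case: eqP => [->|_] //; apply: gca_hom0.
  by case: ifP => _ //; apply: gca_hom0.
have sumG' : \sum_(k < M') G' k = 0.
  rewrite big_split /= -scaler_sumr sum_delta ?leq_maxr //.
  by rewrite -(@sum_widen _ M M' G (leq_maxl _ _)) -e scaleN1r addNr.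
have := uniq M' G' hG' sumG' m (leq_maxr _ _).
by rewrite /G' eqxx scaleN1r => /eqP; rewrite addrC subr_eq0 => /eqP <-.
Qed.

End Gca.

Section Generated.
Variables (W : algType rat) (J : Type) (dg : J -> nat) (g : J -> W) (P : J -> Prop).

(* [hgen p a]: [a] is built in degree [p] from the generators [g j] with [P j];
   keeping track of the construction allows induction over it. *)
Inductive hgen : nat -> W -> Prop :=
| hgenX j : P j -> hgen (dg j) (g j)
| hgen1 : hgen 0 1
| hgen0 p : hgen p 0
| hgenZD p c a b : hgen p a -> hgen p b -> hgen p (c *: a + b)
| hgenM p r a b : hgen p a -> hgen r b -> hgen (p + r) (a * b).

Lemma hgenD p a b : hgen p a -> hgen p b -> hgen p (a + b).
Proof. by move=> ha hb; rewrite -[a]scale1r; apply: hgenZD. Qed.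

Lemma hgenZ p c a : hgen p a -> hgen p (c *: a).
Proof. by move=> ha; rewrite -[_ *: _]addr0; apply: hgenZD => //; apply: hgen0. Qed.

Lemma hgen_sum p (K : Type) (r : seq K) (Q : pred K) (F : K -> W) :
  (forall k, Q k -> hgen p (F k)) -> hgen p (\sum_(k <- r | Q k) F k).
Proof. by move=> hF; apply: big_ind => //; [apply: hgen0 | apply: hgenD]. Qed.

Lemma hgen_hom (hom : nat -> W -> Prop) : is_gca hom ->
  (forall j, P j -> hom (dg j) (g j)) -> forall p a, hgen p a -> hom p a.
Proof.
move=> gca hg p a; elim=> //.
- by case: gca.
- by move=> r; apply: gca_hom0.
- by move=> r c a' b' _ ha _ hb; apply: gca_homZD.
- by move=> r s a' b' _ ha _ hb; case: gca => _ _ hM _ _; apply: hM.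
Qed.

Definition hsum (w : W) := exists N (f : nat -> W),
  (forall k, hgen k (f k)) /\ w = \sum_(k < N) f k.

Lemma hsum_hgen m a : hgen m a -> hsum a.
Proof.
move=> ha; exists m.+1, (fun k => if k == m then a else 0); split.
  by move=> k; case: eqP => [->|_] //; apply: hgen0.
by rewrite sum_delta.
Qed.

Lemma hsum0 : hsum 0.
Proof. exact: hsum_hgen (hgen0 0). Qed.

Lemma hsum1 : hsum 1.
Proof. exact: hsum_hgen hgen1. Qed.

Lemma hsumD a b : hsum a -> hsum b -> hsum (a + b).
Proof.
move=> [N1 [f1 [h1 ->]]] [N2 [f2 [h2 ->]]].
exists (maxn N1 N2), (fun k => (if (k < N1)%N then f1 k else 0) +
                               (if (k < N2)%N then f2 k else 0)).
split.
  by move=> k; apply: hgenD; case: ifP => _ //; apply: hgen0.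
by rewrite big_split /= -!sum_widen ?leq_maxl ?leq_maxr.
Qed.

Lemma hsumZ c a : hsum a -> hsum (c *: a).
Proof.
move=> [N [f [hf ->]]]; exists N, (fun k => c *: f k); split.
  by move=> k; apply: hgenZ.
by rewrite scaler_sumr.
Qed.

Lemma hsumM a b : hsum a -> hsum b -> hsum (a * b).
Proof.
move=> [N1 [f1 [h1 ->]]] [N2 [f2 [h2 ->]]].
exists (N1 + N2)%N, (fun m => \sum_(k < N1) \sum_(l < N2 | (k + l == m)%N) f1 k * f2 l).
split.
  by move=> m; apply: hgen_sum => k _; apply: hgen_sum => l /eqP <-; apply: hgenM.
rewrite mulr_suml [RHS]exchange_big /=; apply: eq_bigr => k _.
rewrite mulr_sumr.
under [RHS]eq_bigr => m _ do rewrite big_mkcond.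
rewrite [RHS]exchange_big /=; apply: eq_bigr => l _.
under eq_bigr => m _ do rewrite eq_sym.
by rewrite sum_delta //; have := ltn_ord k; have := ltn_ord l; lia.
Qed.

Definition hsumb : pred W := fun w => `[< hsum w >].

Lemma hsumb_subalg_closed : GRing.subsemialg_closed hsumb.
Proof.
split; first exact/asboolP/hsum1.
- split; first exact/asboolP/hsum0.
  by move=> a b /asboolP ha /asboolP hb; apply/asboolP/hsumD.
- by move=> c a /asboolP ha; apply/asboolP/hsumZ.
- by move=> a b /asboolP ha /asboolP hb; apply/asboolP/hsumM.
Qed.

Record hsum_subalg := HsumSub { hsum_val : W; hsum_valP : hsumb hsum_val }.
HB.instance Definition _ := [isSub for hsum_val].
HB.instance Definition _ := [Choice of hsum_subalg by <:].
HB.instance Definition _ :=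
  GRing.SubChoice_isSubAlgebra.Build rat W hsumb hsum_subalg hsumb_subalg_closed.

Lemma val_sign k : val ((-1) ^+ k : hsum_subalg) = (-1) ^+ k.
Proof. by elim: k => // k IH; rewrite !exprS rmorphM /= IH. Qed.

Lemma hsum_subalg_gca (hom : nat -> W -> Prop) : is_gca hom ->
  (forall j, P j -> hom (dg j) (g j)) -> is_gca (fun p (s : hsum_subalg) => hom p (val s)).
Proof.
move=> gca hg; have [h0D h1 hM hC [_ hsum_uniq]] := gca; split.
- by move=> p; case: (h0D p) => h0 hZD; split => // c a b; apply: hZD.
- exact: h1.
- by move=> p r a b; apply: hM.
- by move=> p r a b ha hb; apply: val_inj; rewrite /= val_sign; apply: hC.
split.
- move=> s; have /asboolP [N [f [hf e]]] := hsum_valP s.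
  exists N, (fun k => HsumSub (introT (asboolP _) (hsum_hgen (hf k)))); split.
    by move=> k; apply: hgen_hom gca hg _ _ (hf k).
  by apply: val_inj; rewrite rmorph_sum.
- move=> N f hf e k lt; apply: val_inj; apply: (hsum_uniq N (fun k => val (f k))) => //.
  by rewrite -rmorph_sum e.
Qed.

(* The algebra generated by all [g j] is everything: by freeness, the inclusion of
   that subalgebra has a section, since both agree with the identity on generators. *)
Lemma free_hsum (hom : nat -> W -> Prop) :
  is_free_gca hom dg g -> (forall j, P j) -> forall w, hsum w.
Proof.
move=> [gca hg univ] allP.
have gcaS := hsum_subalg_gca gca (fun j _ => hg j).
pose gS j := HsumSub (introT (asboolP _) (hsum_hgen (hgenX (allP j)))).
have [[G [[Gl G1 GM Gh] GE]] _] := univ _ _ gS gcaS hg.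
have [_ uniq] := univ _ hom g gca hg.
move=> w; have <- : val (G w) = w.
  apply: (uniq (fun w => val (G w)) id) => //; last by move=> j; rewrite GE.
  split => //.
  - by move=> c a b; rewrite Gl.
  - by rewrite G1.
  - by move=> a b; rewrite GM.
exact/asboolP/hsum_valP.
Qed.

Lemma hom_hgen (hom : nat -> W -> Prop) : is_gca hom ->
  (forall j, P j -> hom (dg j) (g j)) -> forall m a, hom m a -> hsum a -> hgen m a.
Proof.
move=> gca hg m a ha [N [f [hf e]]].
rewrite (gca_component gca ha (fun k => hgen_hom gca hg (hf k)) e).
by case: ifP => _ //; apply: hgen0.
Qed.

End Generated.

Lemma hgen_cast (W : algType rat) (J : Type) (dg : J -> nat) (g : J -> W) (P : J -> Prop) p p' a :
  p = p' -> hgen dg g P p a -> hgen dg g P p' a.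
Proof. by move=> ->. Qed.

Lemma free_gca_ind (W : algType rat) (hom : nat -> W -> Prop) (J : Type) (dg : J -> nat)
    (g : J -> W) (Q : W -> Prop) :
  is_free_gca hom dg g -> Q 0 -> (forall a b, Q a -> Q b -> Q (a + b)) ->
  (forall p a, hgen dg g (fun _ => True) p a -> Q a) -> forall w, Q w.
Proof.
move=> fr Q0 QD Qgen w.
have [N [f [hf ->]]] := free_hsum fr (fun _ => I) w.
by apply: big_ind => // k _; apply: Qgen (hf k).
Qed.

Lemma cdga_d1 (A : algType rat) (hom : nat -> A -> Prop) d : is_cdga hom d -> d 1 = 0.
Proof.
case=> [[_ h1 _ _ _] _ _ hM _].
have := hM 0%N 1 1 h1; rewrite !mulr1 expr0 !mul1r => e.
by apply: (@addrI _ (d 1)); rewrite addr0 -e.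
Qed.

Lemma cdga_dM (A : algType rat) (hom : nat -> A -> Prop) d p a b :
  is_cdga hom d -> hom p a -> d (a * b) = d a * b + ((-1) ^+ p : rat) *: (a * d b).
Proof. by case=> _ _ _ hM _ ha; rewrite (hM p a b ha) sign_mulE. Qed.

Lemma deriv_m1M (A : algType rat) (hom : nat -> A -> Prop) S p a b :
  is_deriv_m1 hom S -> hom p a -> S (a * b) = S a * b + ((-1) ^+ p : rat) *: (a * S b).
Proof. by case=> _ _ _ hM ha; rewrite (hM p a b ha) sign_mulE. Qed.

Lemma free_mor_commute_d (W A : algType rat) (homW : nat -> W -> Prop) (J : Type)
    (dg : J -> nat) (g : J -> W) (homA : nat -> A -> Prop) D d F :
  is_free_gca homW dg g -> is_cdga homW D -> is_cdga homA d -> is_gca_mor homW homA F ->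
  (forall j, F (D (g j)) = d (F (g j))) -> forall w, F (D w) = d (F w).
Proof.
move=> fr cW cA [lF F1 FM Fh] hg.
have [gca hgW _] := fr; have [_ lD _ _ _] := cW; have [_ ld _ _ _] := cA.
apply: free_gca_ind fr _ _ _.
- by rewrite !(lin_map0 lD, lin_map0 lF, lin_map0 ld).
- by move=> a b e1 e2; rewrite (lin_mapD lD) !(lin_mapD lF) (lin_mapD ld) e1 e2.
move=> p a; elim=> //.
- by rewrite (cdga_d1 cW) F1 (cdga_d1 cA) (lin_map0 lF).
- by move=> r; rewrite (lin_map0 lD) (lin_map0 lF) (lin_map0 ld).
- by move=> r c a' b' _ ea _ eb; rewrite lD lF ea eb lF ld.
- move=> r s a' b' ha ea _ eb.
  have ha' := hgen_hom gca (fun j _ => hgW j) ha.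
  rewrite (cdga_dM _ cW ha') (lin_mapD lF) (lin_mapZ lF) !FM ea eb.
  by rewrite (cdga_dM _ cA (Fh _ _ ha')).
Qed.

Section Theta.
Variables (W : algType rat) (hom : nat -> W -> Prop) (J : Type) (dg : J -> nat)
  (g : J -> W) (D S : W -> W).
Hypotheses (fr : is_free_gca hom dg g) (cW : is_cdga hom D) (dS : is_deriv_m1 hom S).

Lemma deriv_m1_0 : S 0 = 0.
Proof. by case: dS => lS _ _ _; apply: lin_map0. Qed.

Lemma deriv_m1_1 : S 1 = 0.
Proof. by case: dS => _ _ h _; apply: h; case: fr => [[_ h1 _ _ _] _ _]. Qed.

Lemma deriv_m1_sq0 : (forall j, S (S (g j)) = 0) -> forall w, S (S w) = 0.
Proof.
move=> hg; have [gca hgW _] := fr; have [lS Sdeg Sz _] := dS.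
apply: free_gca_ind fr _ _ _.
- by rewrite !deriv_m1_0.
- by move=> a b e1 e2; rewrite !(lin_mapD lS) e1 e2 addr0.
move=> p a; elim=> //.
- by rewrite deriv_m1_1 deriv_m1_0.
- by move=> r; rewrite !deriv_m1_0.
- by move=> r c a' b' _ ea _ eb; rewrite !lS ea eb scaler0 addr0.
move=> r s a' b' ha ea _ eb.
have ha' := hgen_hom gca (fun j _ => hgW j) ha.
rewrite (deriv_m1M _ dS ha') (lin_mapD lS) (lin_mapZ lS).
case: r ha ha' => [|r] ha ha'.
  rewrite (Sz _ ha') mul0r deriv_m1_0 add0r (deriv_m1M _ dS ha') (Sz _ ha').
  by rewrite mul0r add0r eb mulr0 !scaler0.
rewrite (deriv_m1M _ dS (Sdeg _ _ ha')) (deriv_m1M _ dS ha') ea mul0r add0r.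
by rewrite eb mulr0 scaler0 addr0 exprS mulN1r scaleNr addrN.
Qed.

Definition theta w := D (S w) + S (D w).

(* With [t = (-1)^p], the mixed terms of [DS(ab)] and [SD(ab)] cancel in pairs. *)
Lemma theta_cross_cancel (t : rat) (X X' Y U Z Z' : W) : t * t = 1 ->
  ((X + t *: Y) + (- t) *: (U + (- t) *: Z)) + ((X' + t *: U) + (- t) *: (Y + (- t) *: Z'))
  = (X + X') + (Z + Z').
Proof.
move=> tt; rewrite !scalerDr !scalerA mulrNN tt !scale1r !scaleNr.
set a := t *: Y; set b := t *: U.
rewrite (addrC (- b)) (addrC (- a)) -!addrA; congr (_ + _).
rewrite !addrA -(addrA _ X' b) (addrC X' b) addrA subrK.
by rewrite addrC !addrA addNr add0r (addrC Z).
Qed.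

Lemma thetaM p a b : hom p a -> theta (a * b) = theta a * b + a * theta b.
Proof.
move=> ha; have [_ lD Ddeg _ _] := cW; have [lS Sdeg Sz _] := dS.
rewrite /theta (deriv_m1M _ dS ha) (cdga_dM _ cW ha).
case: p ha => [|p] ha.
  rewrite (Sz _ ha) mul0r add0r ?(lin_mapD lD, lin_mapD lS, lin_mapZ lD, lin_mapZ lS).
  rewrite expr0 !scale1r.
  rewrite (cdga_dM _ cW ha) (deriv_m1M _ dS (Ddeg _ _ ha)) (deriv_m1M _ dS ha) (Sz _ ha).
  rewrite (lin_map0 lD) mul0r add0r expr1 scaleN1r !mulrDl !mulrDr.
  rewrite expr0 !scale1r mul0r add0r [S (D a) * b - _ + _]addrAC addrC.
  by rewrite (addrC (D a * S b)) -addrA addNKr addrCA.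
rewrite !(lin_mapD lD, lin_mapD lS, lin_mapZ lD, lin_mapZ lS).
rewrite (cdga_dM _ cW (Sdeg _ _ ha)) (cdga_dM _ cW ha).
rewrite (deriv_m1M _ dS (Ddeg _ _ ha)) (deriv_m1M _ dS ha) !exprS !mulN1r opprK.
by rewrite theta_cross_cancel -?expr2 ?sqrr_sign // mulrDl mulrDr.
Qed.

End Theta.

Inductive lspan (K : fieldType) (U : lmodType K) (J : Type) (e : J -> U) (P : J -> Prop) :
    U -> Prop :=
| lspanX j : P j -> lspan e P (e j)
| lspan0 : lspan e P 0
| lspanZD c a b : lspan e P a -> lspan e P b -> lspan e P (c *: a + b).

Lemma lspanZ (K : fieldType) (U : lmodType K) (J : Type) (e : J -> U) (P : J -> Prop) c a :
  lspan e P a -> lspan e P (c *: a).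
Proof. by move=> ha; rewrite -[_ *: _]addr0; apply: lspanZD ha (lspan0 _ _). Qed.

Section LinearSelection.
Local Open Scope classical_set_scope.
Variables (K : fieldType) (U V : lmodType K).

Definition lin_closed (X : set (U * V)) :=
  forall c a b a' b', X (a, b) -> X (a', b') -> X (c *: a + a', c *: b + b').

(* Graphs of linear maps defined on a subspace of [U]. *)
Definition partial_linear (X : set (U * V)) :=
  [/\ X (0, 0), lin_closed X & forall w, X (0, w) -> w = 0].

Variables (J : Type) (e : J -> U) (P : J -> Prop) (Z : set U) (ok : set (U * V)).
Hypotheses (ok0 : ok (0, 0)) (ok_closed : lin_closed ok) (okZ : forall z, Z z -> ok (z, 0))
  (ok_gen : forall j, P j -> exists w, ok (e j, w)).

Let Zgraph : set (U * V) := fun p => lspan id Z p.1 /\ p.2 = 0.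

Let admissible (X : set (U * V)) := [/\ partial_linear X, Zgraph `<=` X & X `<=` ok].

Let admissible_Zgraph : admissible Zgraph.
Proof.
split; first split.
- by split => //; apply: lspan0.
- move=> c a b a' b' [/= ha ->] [/= ha' ->].
  by split; [apply: lspanZD | rewrite /= scaler0 addr0].
- by move=> w [].
- by [].
- move=> [v w] [/= hv ->]; elim: hv => [z /okZ // | // | c a a' _ ha _ ha'].
  by rewrite -[X in (_, X)](addr0 0) -[X in (_, X + _)](scaler0 _ c); apply: ok_closed.
Qed.

(* [set0] is allowed so that the empty chain has an upper bound. *)
Let admissible_chain_union (F : set (set (U * V))) :
  F `<=` (fun X => X = set0 \/ admissible X) -> total_on F subset ->
  (fun X => X = set0 \/ admissible X) (\bigcup_(X in F) X).
Proof.
move=> FP Ftot.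
have member_adm X p : F X -> X p -> admissible X.
  by move=> FX Xp; case: (FP X FX) => // X0; rewrite X0 in Xp.
case: (pselect (\bigcup_(X in F) X !=set0)) => [[p [X1 FX1 X1p]] | empty]; last first.
  by left; apply/seteqP; split => // p Up; apply: empty; exists p.
have [[X0 _ _] ZX _] := member_adm _ _ FX1 X1p.
right; split; first split.
- by exists X1.
- move=> c a b a' b' [X FX Xp] [X' FX' Xp'].
  have [XX'|X'X] := Ftot X X' FX FX'.
  + have [[_ cl _] _ _] := member_adm _ _ FX' Xp'.
    by exists X' => //; apply: cl => //; apply: XX'.
  + have [[_ cl _] _ _] := member_adm _ _ FX Xp.
    by exists X => //; apply: cl => //; apply: X'X.
- by move=> w [X FX Xp]; have [[_ _ fn] _ _] := member_adm _ _ FX Xp; apply: fn.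
- by move=> q /ZX X1q; exists X1.
- by move=> q [X FX Xq]; have [_ _ Xok] := member_adm _ _ FX Xq; apply: Xok.
Qed.

Let admissible_extend (M : set (U * V)) j w0 :
  admissible M -> ~ (exists w, M (e j, w)) -> ok (e j, w0) ->
  exists M', M `<` M' /\ admissible M'.
Proof.
move=> [[M0 Mcl Mfun] ZM Mok] notM okj.
pose M' p := exists c v w, M (v, w) /\ p = (v + c *: e j, w + c *: w0).
exists M'; split; first split.
- by move=> [v w] Mvw; exists 0, v, w; rewrite !scale0r !addr0.
- move=> M'M; apply: notM; exists w0.
  by apply: M'M; exists 1, 0, 0; rewrite !add0r !scale1r.
split; first split.
- by exists 0, 0, 0; rewrite !scale0r !addr0.
- move=> c a b a' b' [c1 [v1 [w1 [M1 [-> ->]]]]] [c2 [v2 [w2 [M2 [-> ->]]]]].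
  exists (c * c1 + c2), (c *: v1 + v2), (c *: w1 + w2); split; first exact: Mcl.
  by congr pair; rewrite scalerDr scalerA scalerDl addrACA.
- move=> w' [c [v [w [Mvw [e1 ->]]]]].
  have [c0|cn0] := eqVneq c 0.
    by move: e1; rewrite c0 !scale0r !addr0 => v0; apply: Mfun; rewrite v0.
  exfalso; apply: notM; exists ((- c^-1) *: w + 0).
  have -> : e j = (- c^-1) *: v + 0.
    by rewrite addr0 scaleNr -scalerN (addr0_eq (esym e1)) scalerA mulVf // scale1r.
  by apply: Mcl.
- by move=> p /ZM Mp; exists 0, p.1, p.2; rewrite !scale0r !addr0; case: p Mp.
- by move=> _ [c [v [w [Mvw ->]]]]; rewrite addrC [w + _]addrC; apply: ok_closed => //; apply: Mok.
Qed.

Lemma exists_linear_selection : exists tau : U -> V,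
  [/\ forall v, lspan e P v -> ok (v, tau v),
      forall c a b, lspan e P a -> lspan e P b -> tau (c *: a + b) = c *: tau a + tau b &
      forall z, Z z -> tau z = 0].
Proof.
have [M [PM maxM]] := Zorn_bigcup admissible_chain_union.
have admM : admissible M.
  case: PM => // M0; exfalso; apply: (maxM Zgraph); last by right; apply: admissible_Zgraph.
  rewrite M0; split => // sub; have /sub : Zgraph (0, 0) by split => //; apply: lspan0.
  by [].
have [[M0 Mcl Mfun] ZM Mok] := admM.
have Mgen j : P j -> exists w, M (e j, w).
  move=> Pj; case: (pselect (exists w, M (e j, w))) => // notM; exfalso.
  have [w0 okj] := ok_gen Pj.
  have [M' [MM' admM']] := admissible_extend admM notM okj.
  by apply: (maxM M' MM'); right.
have Mdom v : lspan e P v -> exists w, M (v, w).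
  elim=> [j /Mgen // | | c a b _ [wa Ma] _ [wb Mb]]; first by exists 0.
  by exists (c *: wa + wb); apply: Mcl.
have Muniq v w1 w2 : M (v, w1) -> M (v, w2) -> w1 = w2.
  move=> M1 M2; have := Mcl (-1) _ _ _ _ M1 M2.
  by rewrite !scaleN1r addNr => /Mfun /eqP; rewrite addrC subr_eq0 => /eqP.
pose tau v := if pselect (exists w, M (v, w)) is left h then projT1 (cid h) else 0.
have tauP v : (exists w, M (v, w)) -> M (v, tau v).
  by rewrite /tau; case: pselect => // h _; apply: projT2 (cid h).
exists tau; split.
- by move=> v /Mdom /tauP /Mok.
- move=> c a b /Mdom /tauP Ma /Mdom /tauP Mb; have Mab := Mcl c _ _ _ _ Ma Mb.
  by apply: (Muniq _ _ _ _ Mab); apply: tauP; exists (c *: tau a + tau b).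
- move=> z Zz; have Mz : M (z, 0) by apply: ZM; split => //; apply: lspanX.
  by apply: (Muniq _ _ _ _ Mz); apply: tauP; exists 0.
Qed.

End LinearSelection.

Section SmallDegrees.
Variables (W : algType rat) (J : Type) (dg : J -> nat) (g : J -> W) (P : J -> Prop).
Hypothesis dg2 : forall j, (2 <= dg j)%N.

Lemma hgen_deg0 a : hgen dg g P 0 a -> exists c : rat, a = c *: 1.
Proof.
move e0 : 0%N => p ha; elim: ha e0 => {p a}.
- by move=> j _ e; have := dg2 j; rewrite -e.
- by exists 1; rewrite scale1r.
- by exists 0; rewrite scale0r.
- move=> p c a b _ IHa _ IHb e; have [ca ->] := IHa e; have [cb ->] := IHb e.
  by exists (c * ca + cb); rewrite scalerA scalerDl.
- move=> p r a b _ IHa _ IHb pr0; have [p0 r0] : 0 = p /\ 0 = r by lia.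
  have [ca ->] := IHa p0; have [cb ->] := IHb r0.
  by exists (ca * cb); rewrite -scalerAl mul1r scalerA.
Qed.

Lemma hgen_deg1 a : hgen dg g P 1 a -> a = 0.
Proof.
move e1 : 1%N => p ha; elim: ha e1 => {p a} //.
- by move=> j _ e; have := dg2 j; rewrite -e.
- by move=> p c a b _ IHa _ IHb e; rewrite IHa ?IHb // scaler0 addr0.
move=> p r a b ha IHa hb IHb e.
have [[p0 r1]|[p1 r0]] : (p = 0 /\ r = 1 \/ p = 1 /\ r = 0)%N by lia.
- by rewrite IHb ?mulr0.
- by rewrite IHa ?mul0r.
Qed.

End SmallDegrees.

Lemma mor_fix_hgen (W : algType rat) (hom : nat -> W -> Prop) (J : Type) (dg : J -> nat)
    (g : J -> W) (P : J -> Prop) (f : W -> W) :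
  is_gca_mor hom hom f -> (forall j, P j -> f (g j) = g j) ->
  forall p a, hgen dg g P p a -> f a = a.
Proof.
move=> [lf f1 fM _] hf p a; elim=> //.
- by move=> r; apply: lin_map0.
- by move=> r c a' b' _ ea _ eb; rewrite lf ea eb.
- by move=> r s a' b' _ ea _ eb; rewrite fM ea eb.
Qed.

Lemma cdga_d_preimage (A : algType rat) (hom : nat -> A -> Prop) d m u :
  is_cdga hom d -> hom m.+1 (d u) -> exists u', hom m u' /\ d u = d u'.
Proof.
move=> cA hdu; have [gca ld dh _ _] := cA; have [_ _ _ _ [hsum _]] := gca.
have [N [f [hf eu]]] := hsum u.
pose G k := if k is k'.+1 then d (f k') else 0.
have hG k : hom k (G k) by case: k => [|k] /=; [apply: gca_hom0 | apply: dh].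
have e : d u = \sum_(k < N.+1) G k by rewrite big_ord_recl /= add0r eu (lin_map_sum ld).
rewrite (gca_component gca hdu hG e) /=; case: ifP => _; first by exists (f m).
by exists 0; split; [apply: gca_hom0 | rewrite (lin_map0 ld)].
Qed.

Lemma in_span1 (A : algType rat) (I : Type) (x : I -> A) (P : I -> Prop) i :
  P i -> in_span x P (x i).
Proof. by move=> Pi; exists 1%N, (fun=> i), (fun=> 1); rewrite big_ord1 scale1r. Qed.

Section LowDegrees.
Variables (A : algType rat) (hom : nat -> A -> Prop) (d : A -> A) (I : Type) (deg : I -> nat)
  (x : I -> A) (q n : nat) (al al' : A -> A).
Hypotheses (cA : is_cdga hom d) (frA : is_free_gca hom deg x) (deg2 : forall i, (2 <= deg i)%N)
  (degC : forall i, deg i = q \/ (deg i <= n)%N) (nq : (n < q)%N)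
  (alm : is_cdga_mor hom d hom d al) (alm' : is_cdga_mor hom d hom d al')
  (hlow : forall v, in_span x (fun i => (deg i <= n)%N) v -> al v = v /\ al' v = v)
  (hq : forall v, in_span x (fun i => deg i = q) v -> exists u, (al' v - v) - (al v - v) = d u).

Local Notation hgen_low := (hgen deg x (fun i => (deg i <= n)%N)).
Local Notation span_q := (lspan x (fun i => deg i = q)).

(* A product of two elements of positive degree involving a generator of degree [q]
   has degree at least [q + 2]. *)
Lemma hgen_split p a : hgen deg x (fun => True) p a -> (p <= q.+1)%N ->
  exists l v, [/\ hgen_low p l, span_q v, p = q \/ v = 0 & a = l + v].
Proof.
elim=> {p a}.
- move=> j _ _; case: (degC j) => hj.
  + by exists 0, (x j); split; [apply: hgen0 | apply: lspanX | left | rewrite add0r].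
  + by exists (x j), 0; split; [apply: hgenX | apply: lspan0 | right | rewrite addr0].
- by exists 1, 0; split; [apply: hgen1 | apply: lspan0 | right | rewrite addr0].
- by move=> p _; exists 0, 0; split; [apply: hgen0 | apply: lspan0 | right | rewrite addr0].
- move=> p c a b _ IHa _ IHb hp.
  have [la [va [hla hva ea ->]]] := IHa hp; have [lb [vb [hlb hvb eb ->]]] := IHb hp.
  exists (c *: la + lb), (c *: va + vb); split; [exact: hgenZD | exact: lspanZD | |].
    by case: ea eb => [-> _|-> [->|->]]; [left | left | right; rewrite scaler0 addr0].
  by rewrite scalerDr addrACA.
move=> p r a b ha IHa hb IHb hpr.
case: p ha IHa hpr => [|[|p]] ha IHa hpr.
- have [ca ->] := hgen_deg0 deg2 ha; have [lb [vb [hlb hvb eb ->]]] := IHb hpr.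
  exists (ca *: lb), (ca *: vb); split; [exact: hgenZ | exact: lspanZ | |].
    by case: eb => [->|->]; [left | right; rewrite scaler0].
  by rewrite -scalerAl mul1r scalerDr.
- rewrite (hgen_deg1 deg2 ha) mul0r.
  by exists 0, 0; split; [apply: hgen0 | apply: lspan0 | right | rewrite addr0].
case: r hb IHb hpr => [|[|r]] hb IHb hpr.
- rewrite addn0 in hpr *.
  have [cb ->] := hgen_deg0 deg2 hb; have [la [va [hla hva ea ->]]] := IHa hpr.
  exists (cb *: la), (cb *: va); split; [exact: hgenZ | exact: lspanZ | |].
    by case: ea => [->|->]; [left | right; rewrite scaler0].
  by rewrite -scalerAr mulr1 scalerDr.
- rewrite (hgen_deg1 deg2 hb) mulr0.
  by exists 0, 0; split; [apply: hgen0 | apply: lspan0 | right | rewrite addr0].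
have [la [va [hla _ ea ->]]] := IHa ltac:(lia).
have [lb [vb [hlb _ eb ->]]] := IHb ltac:(lia).
have -> : va = 0 by case: ea => // e; exfalso; lia.
have -> : vb = 0 by case: eb => // e; exfalso; lia.
by exists (la * lb), 0; split; [apply: hgenM | apply: lspan0 | right | rewrite !addr0].
Qed.

Lemma hom_split m a : hom m a -> (m <= q.+1)%N ->
  exists l v, [/\ hgen_low m l, span_q v, m = q \/ v = 0 & a = l + v].
Proof.
move=> ha hm; have [gca hx _] := frA; apply: hgen_split hm.
exact: hom_hgen gca (fun j _ => hx j) _ _ ha (free_hsum frA (fun=> Logic.I) a).
Qed.

Lemma d_gen_split i : exists l v,
  [/\ hgen_low (deg i).+1 l, span_q v, (deg i).+1 = q \/ v = 0 & d (x i) = l + v].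
Proof.
have [[_ hx _] [_ _ dh _ _]] := (frA, cA).
by apply: hom_split; [apply/dh/hx | case: (degC i); lia].
Qed.

(* The part in [V^q] of the differential of a generator of degree at most [n]. *)
Definition low_d_residue v := exists i l,
  [/\ (deg i <= n)%N, hgen_low (deg i).+1 l & d (x i) = l + v].

Lemma mor_fix_low_d_residue f : is_cdga_mor hom d hom d f ->
  (forall v, in_span x (fun i => (deg i <= n)%N) v -> f v = v) ->
  forall v, low_d_residue v -> f v = v.
Proof.
move=> [fm fd] hf v [i [l [hi hl e]]].
have -> : v = d (x i) - l by rewrite e addrC addKr.
have [lf _ _ _] := fm.
rewrite (lin_mapB lf) fd (hf _ (in_span1 x hi)) (mor_fix_hgen fm _ hl) //.
by move=> j hj; apply/hf/in_span1.
Qed.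

Lemma exists_diff_primitive : exists tau : A -> A,
  [/\ forall v, span_q v -> hom q.-1 (tau v) /\ d (tau v) = al' v - al v,
      forall c a b, span_q a -> span_q b -> tau (c *: a + b) = c *: tau a + tau b &
      forall v, low_d_residue v -> tau v = 0].
Proof.
have [[gca hx _] [_ ld _ _ _]] := (frA, cA).
have [[[la _ _ lh] _] [[la' _ _ lh'] _]] := (alm, alm').
pose ok (p : A * A) := hom q.-1 p.2 /\ d p.2 = al' p.1 - al p.1.
have ok_closed : lin_closed ok.
  move=> c a b a' b' [/= hb db] [/= hb' db']; split; first exact: gca_homZD.
  by rewrite /= ld la la' db db' scalerBr opprD addrACA.
have okZ z : low_d_residue z -> ok (z, 0).
  move=> hz; split; first exact: gca_hom0.
  rewrite /= (lin_map0 ld).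
  rewrite (mor_fix_low_d_residue alm' (fun v h => proj2 (hlow h)) hz).
  by rewrite (mor_fix_low_d_residue alm (fun v h => proj1 (hlow h)) hz) subrr.
apply: exists_linear_selection ok_closed okZ _.
- by split; [apply: gca_hom0 | rewrite /= (lin_map0 ld) (lin_map0 la) (lin_map0 la') subrr].
move=> j hj; have [u0 du0] := hq (in_span1 x hj).
have hdu0 : hom q (d u0).
  by rewrite -du0 opprB addrA subrK; apply: (gca_homB gca); [apply: lh' | apply: lh]; rewrite -hj.
have [u [hu eu]] : exists u, hom q.-1 u /\ d u0 = d u.
  by apply: cdga_d_preimage cA _; rewrite prednK //; apply: leq_ltn_trans nq.
by exists u; split => //=; rewrite -eu -du0 opprB addrA subrK.
Qed.

End LowDegrees.

Definition not_top_gen (I : Type) (deg : I -> nat) (n : nat) (j : I + I + I) : Prop :=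
  if j is inl (inl i) then (deg i <= n)%N else True.

Section Homotopy.
Variables (A : algType rat) (hom : nat -> A -> Prop) (d : A -> A) (I : Type) (deg : I -> nat)
  (x : I -> A) (q n : nat) (al al' : A -> A).
Hypotheses (cA : is_cdga hom d) (frA : is_free_gca hom deg x) (deg2 : forall i, (2 <= deg i)%N)
  (degC : forall i, deg i = q \/ (deg i <= n)%N) (nq : (n < q)%N)
  (alm : is_cdga_mor hom d hom d al)
  (hlow : forall v, in_span x (fun i => (deg i <= n)%N) v -> al v = v /\ al' v = v).

Local Notation hgen_low := (hgen deg x (fun i => (deg i <= n)%N)).
Local Notation span_q := (lspan x (fun i => deg i = q)).

Variable tau : A -> A.
Hypotheses (tau_d : forall v, span_q v -> hom q.-1 (tau v) /\ d (tau v) = al' v - al v)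
  (tau_lin : forall c a b, span_q a -> span_q b -> tau (c *: a + b) = c *: tau a + tau b)
  (tau_res : forall v, low_d_residue d deg x n v -> tau v = 0).

Lemma tau0 : tau 0 = 0.
Proof.
have := tau_lin 1 (lspan0 _ _) (lspan0 _ _); rewrite !scale1r addr0 => e.
by apply: (@addrI _ (tau 0)); rewrite addr0 -e.
Qed.

Definition bar_image i := if deg i == q then tau (x i) else 0.

Lemma bar_image_top i : deg i = q -> bar_image i = tau (x i).
Proof. by rewrite /bar_image => ->; rewrite eqxx. Qed.

Lemma bar_image_low i : (deg i <= n)%N -> bar_image i = 0.
Proof. by rewrite /bar_image; case: eqP => // ->; rewrite leqNgt nq. Qed.

Lemma bar_image_hom i : hom (deg i).-1 (bar_image i).
Proof.
rewrite /bar_image; case: eqP => [e|_]; last by case: cA => gca _ _ _ _; apply: gca_hom0.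
by rewrite e; case: (tau_d (lspanX x e)).
Qed.

Section Cylinder.
Variables (W : algType rat) (homW : nat -> W -> Prop) (wv wb wh : I -> W)
  (iota : A -> W) (D S : W -> W).
Hypotheses (frW : is_free_gca homW (sum3 deg (fun i => (deg i).-1) deg) (sum3 wv wb wh))
  (iotam : is_gca_mor hom homW iota) (iotax : forall i, iota (x i) = wv i)
  (cW : is_cdga homW D) (Dwv : forall i, D (wv i) = iota (d (x i)))
  (Dwb : forall i, D (wb i) = wh i) (Dwh : forall i, D (wh i) = 0)
  (dS : is_deriv_m1 homW S) (Swv : forall i, S (wv i) = wb i)
  (Swb : forall i, S (wb i) = 0) (Swh : forall i, S (wh i) = 0).

Local Notation dgW := (sum3 deg (fun i => (deg i).-1) deg).
Local Notation gW := (sum3 wv wb wh).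
Local Notation hgenL := (hgen dgW gW (not_top_gen deg n)).
Local Notation theta := (theta D S).

Lemma S_sq0 w : S (S w) = 0.
Proof.
apply: (deriv_m1_sq0 frW dS) w => -[[i|i]|i] /=.
- by rewrite Swv Swb.
- by rewrite Swb (deriv_m1_0 dS).
- by rewrite Swh (deriv_m1_0 dS).
Qed.

Lemma hgenL_hom p w : hgenL p w -> homW p w.
Proof. by move=> hw; have [gca hg _] := frW; apply: (hgen_hom gca (fun j _ => hg j) hw). Qed.

Lemma hgenL_iota_low p l : hgen_low p l -> hgenL p (iota l) /\ hgenL p.-1 (S (iota l)).
Proof.
have [lio io1 ioM _] := iotam; have [lS _ Sz _] := dS.
elim=> {p l}.
- move=> j hj; rewrite iotax Swv; split.
  + exact: (@hgenX _ _ dgW gW _ (inl (inl j)) hj).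
  + exact: (@hgenX _ _ dgW gW _ (inl (inr j)) Logic.I).
- by rewrite io1 (deriv_m1_1 frW dS); split; [apply: hgen1 | apply: hgen0].
- by move=> p; rewrite (lin_map0 lio) (deriv_m1_0 dS); split; apply: hgen0.
- by move=> p c a b _ [h1 h2] _ [h1' h2']; rewrite lio lS; split; apply: hgenZD.
move=> p r a b _ [h1 h2] _ [h1' h2']; rewrite ioM; split; first exact: hgenM.
rewrite (deriv_m1M _ dS (hgenL_hom h1)); apply: hgenD.
- case: p h1 h2 => [|p] h1 h2; first by rewrite (Sz _ (hgenL_hom h1)) mul0r; apply: hgen0.
  by apply: hgen_cast (hgenM h2 h1'); rewrite addSn.
- apply: hgenZ; case: r h1' h2' => [|r] h1' h2'.
    by rewrite (Sz _ (hgenL_hom h1')) mulr0; apply: hgen0.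
  by apply: hgen_cast (hgenM h1 h2'); rewrite addnS.
Qed.

Lemma hgenL_S_iota_span v : span_q v -> hgenL q.-1 (S (iota v)).
Proof.
have [lio _ _ _] := iotam; have [lS _ _ _] := dS.
elim=> {v} [j hj | | c a b _ ha _ hb].
- rewrite iotax Swv; apply: hgen_cast (@hgenX _ _ dgW gW _ (inl (inr j)) Logic.I).
  by rewrite /= hj.
- by rewrite (lin_map0 lio) (deriv_m1_0 dS); apply: hgen0.
- by rewrite lio lS; apply: hgenZD.
Qed.

Lemma theta_wv j : theta (wv j) = wh j + S (iota (d (x j))).
Proof. by rewrite /theta Swv Dwb Dwv. Qed.

Lemma theta_lin : lin_map theta.
Proof.
have [_ lD _ _ _] := cW; have [lS _ _ _] := dS.
by move=> c a b; rewrite /theta !lS !lD !lS addrACA scalerDr.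
Qed.

Lemma theta_hgenL p w : hgenL p w -> hgenL p (theta w).
Proof.
have [lio _ _ _] := iotam; have [_ lD _ _ _] := cW; have [lS _ _ _] := dS.
have lT := theta_lin.
elim=> {p w}.
- move=> -[[j|j]|j] /= hj.
  + rewrite theta_wv; have [l [v [hl sv ev ->]]] := d_gen_split cA frA deg2 degC nq j.
    rewrite (lin_mapD lio) (lin_mapD lS); apply: hgenD.
      exact: (@hgenX _ _ dgW gW _ (inr j) Logic.I).
    apply: hgenD; first exact: (proj2 (hgenL_iota_low hl)).
    case: ev => [e|->]; first by apply: hgen_cast (hgenL_S_iota_span sv); rewrite -e.
    by rewrite (lin_map0 lio) (deriv_m1_0 dS); apply: hgen0.
  + by rewrite /theta Swb Dwb Swh (lin_map0 lD) addr0; apply: hgen0.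
  + by rewrite /theta Swh Dwh (lin_map0 lD) (deriv_m1_0 dS) addr0; apply: hgen0.
- rewrite /theta (deriv_m1_1 frW dS) (cdga_d1 cW) (lin_map0 lD) (deriv_m1_0 dS) addr0.
  exact: hgen0.
- by move=> p; rewrite (lin_map0 lT); apply: hgen0.
- by move=> p c a b _ ha _ hb; rewrite lT; apply: hgenZD.
- move=> p r a b ha IHa hb IHb.
  by rewrite (thetaM cW dS _ (hgenL_hom ha)); apply: hgenD; apply: hgenM.
Qed.

(* For [deg j = q], [d (x j)] has degree [q + 1], hence involves no generator of
   degree [q]. *)
Lemma theta_iota_span v : span_q v -> hgenL q (theta (iota v)).
Proof.
have [lio _ _ _] := iotam.
elim=> {v} [j hj | | c a b _ ha _ hb].
- rewrite iotax theta_wv; have [l [v [hl _ ev ->]]] := d_gen_split cA frA deg2 degC nq j.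
  have -> : v = 0 by case: ev => // e; exfalso; lia.
  rewrite addr0; apply: hgen_cast (hgenD _ (proj2 (hgenL_iota_low hl))).
    by rewrite hj.
  exact: (@hgenX _ _ dgW gW _ (inr j) Logic.I).
- by rewrite (lin_map0 lio) (lin_map0 theta_lin); apply: hgen0.
- by rewrite lio theta_lin; apply: hgenZD.
Qed.

Lemma theta_hsumL w : hsum dgW gW (not_top_gen deg n) w ->
  hsum dgW gW (not_top_gen deg n) (theta w).
Proof.
move=> [N [f [hf ->]]]; exists N, (fun k => theta (f k)); split.
  by move=> k; apply: theta_hgenL.
by rewrite (lin_map_sum theta_lin).
Qed.

Lemma hsumL_theta_iter i k :
  hsum dgW gW (not_top_gen deg n) (iter k.+1 theta (iota (d (x i)))).
Proof.
have [lio _ _ _] := iotam.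
elim: k => [|k IH] /=; last exact: theta_hsumL.
have [l [v [hl sv _ ->]]] := d_gen_split cA frA deg2 degC nq i.
rewrite (lin_mapD lio) (lin_mapD theta_lin); apply: hsumD; apply: hsum_hgen.
- exact: theta_hgenL (proj1 (hgenL_iota_low hl)).
- exact: theta_iota_span sv.
Qed.

(* Since [S] squares to zero, [S D S = S theta]. *)
Lemma SD_iter i k : iter k.+1 (S \o D) (wv i) = S (iter k theta (iota (d (x i)))).
Proof.
have [lS _ _ _] := dS.
elim: k => [|k IH]; first by rewrite /= Dwv.
rewrite iterS IH /=; set z := iter k theta _.
have -> : D (S z) = theta z - S (D z) by rewrite /theta addrK.
by rewrite (lin_mapB lS) S_sq0 subr0.
Qed.

Section Realization.
Variable F : W -> A.
Hypotheses (Fm : is_gca_mor homW hom F) (Fwv : forall i, F (wv i) = al (x i))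
  (Fwb : forall i, F (wb i) = bar_image i) (Fwh : forall i, F (wh i) = d (bar_image i)).

Lemma F_iota a : F (iota a) = al a.
Proof.
have [gcaA hx univA] := frA; have [alm0 _] := alm; have [_ _ _ alh] := alm0.
have [_ uniqA] := univA A hom (fun i => al (x i)) gcaA (fun i => alh _ _ (hx i)).
apply: (uniqA (fun a => F (iota a)) al) => //; first exact: gca_mor_comp iotam Fm.
by move=> i; rewrite iotax Fwv.
Qed.

Lemma F_D w : F (D w) = d (F w).
Proof.
have [lF _ _ _] := Fm; have [_ _ _ _ dd0] := cA; have [_ ald] := alm.
apply: (free_mor_commute_d frW cW cA Fm) => -[[i|i]|i] /=.
- by rewrite Dwv F_iota ald Fwv.
- by rewrite Dwb Fwh Fwb.
- by rewrite Dwh (lin_map0 lF) Fwh dd0.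
Qed.

Lemma FS_hgenL p w : hgenL p w -> F (S w) = 0.
Proof.
have [lF _ FM _] := Fm; have [lS _ _ _] := dS.
elim=> {p w}.
- move=> -[[j|j]|j] /= hj.
  + by rewrite Swv Fwb bar_image_low.
  + by rewrite Swb (lin_map0 lF).
  + by rewrite Swh (lin_map0 lF).
- by rewrite (deriv_m1_1 frW dS) (lin_map0 lF).
- by move=> p; rewrite (deriv_m1_0 dS) (lin_map0 lF).
- by move=> p c a b _ ea _ eb; rewrite lS lF ea eb scaler0 addr0.
move=> p r a b ha ea _ eb.
rewrite (deriv_m1M _ dS (hgenL_hom ha)) (lin_mapD lF) (lin_mapZ lF) !FM ea eb.
by rewrite mul0r mulr0 scaler0 addr0.
Qed.

Lemma FS_hsumL w : hsum dgW gW (not_top_gen deg n) w -> F (S w) = 0.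
Proof.
have [lF _ _ _] := Fm; have [lS _ _ _] := dS.
move=> [N [f [hf ->]]]; rewrite (lin_map_sum lS) (lin_map_sum lF) big1 // => k _.
exact: FS_hgenL (hf k).
Qed.

Lemma F_S_iota_span v : span_q v -> F (S (iota v)) = tau v.
Proof.
have [lF _ _ _] := Fm; have [lio _ _ _] := iotam; have [lS _ _ _] := dS.
elim=> {v} [j hj | | c a b sa ea sb eb].
- by rewrite iotax Swv Fwb bar_image_top.
- by rewrite (lin_map0 lio) (deriv_m1_0 dS) (lin_map0 lF) tau0.
- by rewrite lio lS lF ea eb tau_lin.
Qed.

Lemma F_SD_iter i k : F (iter k.+1 (S \o D) (wv i)) = 0.
Proof.
have [lF _ _ _] := Fm; have [lio _ _ _] := iotam; have [lS _ _ _] := dS.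
rewrite SD_iter; case: k => [|k]; last exact: FS_hsumL (hsumL_theta_iter i k).
have [l [v [hl sv ev dxi]]] := d_gen_split cA frA deg2 degC nq i.
rewrite /= dxi (lin_mapD lio) (lin_mapD lS) (lin_mapD lF) (FS_hgenL (proj1 (hgenL_iota_low hl))).
rewrite F_S_iota_span // add0r.
case: (degC i) => hi; first by case: ev => [e|->]; [exfalso; lia | apply: tau0].
by apply: tau_res; exists i, l.
Qed.

Lemma F_exp_theta i N :
  F (wv i + wh i + \sum_(1 <= k < N.+1) (k`!%:R : rat)^-1 *: iter k (S \o D) (wv i))
  = al' (x i).
Proof.
have [lF _ _ _] := Fm; have [_ ld _ _ _] := cA.
rewrite !(lin_mapD lF) (lin_map_sum lF) Fwv Fwh big_nat_cond big1 ?addr0; last first.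
  move=> k /andP [/andP [hk _] _]; case: k hk => // k _.
  by rewrite (lin_mapZ lF) F_SD_iter scaler0.
case: (degC i) => hi.
- by rewrite bar_image_top // (proj2 (tau_d (lspanX x hi))) addrC subrK.
- by rewrite bar_image_low // (lin_map0 ld) addr0; have [-> ->] := hlow (in_span1 x hi).
Qed.

End Realization.

Lemma cylinder_realization : exists F : W -> A,
  [/\ is_cdga_mor homW D hom d F,
      (forall i, F (wv i) = al (x i)) &
      (forall i, exists N0, forall N, (N0 <= N)%N ->
         F (wv i + wh i +
            \sum_(1 <= k < N.+1) (k`!%:R : rat)^-1 *: iter k (S \o D) (wv i))
         = al' (x i))].
Proof.
have [_ _ univW] := frW; have [gcaA hx _] := frA; have [_ _ dh _ _] := cA.
have [[_ _ _ alh] _] := alm.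
pose b := sum3 (fun i => al (x i)) bar_image (fun i => d (bar_image i)).
have homb j : hom (dgW j) (b j).
  case: j => [[i|i]|i] /=; [exact/alh/hx | exact: bar_image_hom |].
  by have := dh _ _ (bar_image_hom i); rewrite prednK //; apply: leq_trans (deg2 i).
have [[F [Fm FE]] _] := univW A hom b gcaA homb.
have Fwv i : F (wv i) = al (x i) by apply: (FE (inl (inl i))).
have Fwb i : F (wb i) = bar_image i by apply: (FE (inl (inr i))).
have Fwh i : F (wh i) = d (bar_image i) by apply: (FE (inr i)).
exists F; split => [|//|i]; first by split => // w; apply: F_D.
by exists 0%N => N _; apply: F_exp_theta.
Qed.

End Cylinder.

Lemma homotopic_of_diff_primitive : homotopic hom d deg x al al'.
Proof.
move=> W homW wv wb wh iota D S frW iotam iotax cW Dwv Dwb Dwh dS Swv Swb Swh.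
exact: (cylinder_realization frW iotam iotax cW Dwv Dwb Dwh dS Swv Swb Swh).
Qed.

End Homotopy.

Unset Implicit Arguments.

Theorem lemma2p2 (A : algType rat) (hom : nat -> A -> Prop) (d : A -> A)
    (I : Type) (deg : I -> nat) (x : I -> A) (q n : nat) (al al' : A -> A) :
  is_cdga hom d ->
  is_free_gca hom deg x ->
  (forall i, (2 <= deg i)%N) ->
  (forall i, deg i = q \/ (deg i <= n)%N) ->
  (n < q)%N ->
  is_cdga_mor hom d hom d al ->
  is_cdga_mor hom d hom d al' ->
  (forall v, in_span x (fun i => (deg i <= n)%N) v -> al v = v /\ al' v = v) ->
  (forall v, in_span x (fun i => deg i = q) v ->
     exists u, (al' v - v) - (al v - v) = d u) ->
  homotopic hom d deg x al al'.
Proof.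
move=> cA frA deg2 degC nq alm alm' hlow hq.
have [tau [tau_d tau_lin tau_res]] :=
  exists_diff_primitive cA frA nq alm alm' hlow hq.
exact: (homotopic_of_diff_primitive cA frA deg2 degC nq alm hlow tau_d tau_lin tau_res).
Qed.
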